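(* Let $\mathcal{W}$ be the smallest class of digraphs such that: (1) every transitive oriented graph is in $\mathcal{W}$; (2) every semicomplete digraph is in $\mathcal{W}$; (3) every symmetric digraph is in $\mathcal{W}$; (4) if $D \in \mathcal{W}$ has vertices $v_1,\dots,v_n$ and $H_1,\dots,H_n \in \mathcal{W}$, then $D[H_1,\dots,H_n] \in \mathcal{W}$. Then $\mathcal{W}$ is exactly the class of weakly quasi-transitive digraphs.
   Context: Digraphs are finite, have no loops and no multiple arcs, but may contain digons; an arc lying in a digon is called symmetric, otherwise non-symmetric. An oriented graph has no symmetric arc; a symmetric digraph has only symmetric arcs. A transitive oriented graph is an oriented graph such that arcs $uv$ and $vw$ imply the arc $uw$. A digraph is semicomplete if between any two distinct vertices there is at least one arc. $N^-(v)$ / $N^+(v)$ denote the sets of in-/out-neighbours of $v$; two vertices are adjacent if there is at least one arc between them. Two neighbours $u,w$ of $v$ are synchronous neighbours of $v$ if both lie in $N^-(v)\setminus N^+(v)$, or both in $N^+(v)\setminus N^-(v)$, or both in $N^-(v)\cap N^+(v)$; otherwise they are asynchronous. A digraph is weakly quasi-transitive if for each vertex $v$, any two asynchronous neighbours of $v$ are adjacent. For a digraph $D$ with vertices $v_1,\dots,v_n$ and vertex-disjoint digraphs $H_1,\dots,H_n$, the substitution $D[H_1,\dots,H_n]$ is the digraph obtained from the disjoint union of $H_1,\dots,H_n$ by adding all arcs $xy$ with $x \in V(H_i)$, $y \in V(H_j)$ for every arc $v_iv_j$ of $D$. *)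

From mathcomp Require Import all_boot.
Set Implicit Arguments. Unset Strict Implicit. Unset Printing Implicit Defensive.

(* A digraph on the finite vertex type T is an arc relation E : rel T;
   E u v means there is an arc uv.  No multiple arcs by construction;
   "no loops" is the hypothesis irreflexive E. *)

Section Digraphs.
Variable T : finType.
Implicit Types E : rel T.

Definition is_digraph E := irreflexive E.

Definition oriented E := forall u v, E u v -> ~~ E v u.
Definition symmetric_digraph E := forall u v, E u v -> E v u.
Definition transitive_oriented E :=
  oriented E /\ (forall u v w, E u v -> E v w -> E u w).
Definition semicomplete E := forall u v, u != v -> E u v || E v u.

Definition adjacent E u v := E u v || E v u.

Definition in_only E v w := E w v && ~~ E v w.
Definition out_only E v w := E v w && ~~ E w v.
Definition both_nb E v w := E w v && E v w.

Definition synchronous E v u w :=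
  [|| in_only E v u && in_only E v w,
      out_only E v u && out_only E v w |
      both_nb E v u && both_nb E v w].

Definition asynchronous E v u w :=
  adjacent E v u && adjacent E v w && ~~ synchronous E v u w.

Definition weakly_quasi_transitive E :=
  forall v u w, asynchronous E v u w -> adjacent E u w.
End Digraphs.

(* Substitution D[H_t : t in T]: vertex set is the disjoint union
   {t : T & U t}; arcs inside a block come from H_t, arcs between blocks
   x in H_i, y in H_j (i <> j) exist iff v_i v_j is an arc of D. *)
Definition subst_rel (T : finType) (D : rel T) (U : T -> finType)
  (H : forall t, rel (U t)) : rel {t : T & U t} :=
  fun x y => if tag x == tag y then H (tag x) (tagged x) (tagged_as x y)
             else D (tag x) (tag y).

Inductive inW : forall T : finType, rel T -> Prop :=
| W_trans (T : finType) (E : rel T) :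
    is_digraph E -> transitive_oriented E -> inW E
| W_semi (T : finType) (E : rel T) :
    is_digraph E -> semicomplete E -> inW E
| W_sym (T : finType) (E : rel T) :
    is_digraph E -> symmetric_digraph E -> inW E
| W_subst (T : finType) (D : rel T) (U : T -> finType)
    (H : forall t, rel (U t)) :
    inW D -> (forall t, inW (H t)) -> inW (subst_rel D H)
| W_iso (T T' : finType) (E : rel T) (E' : rel T') (f : T -> T') :
    bijective f -> (forall x y, E' (f x) (f y) = E x y) ->
    inW E -> inW E'.

From mathcomp Require Import all_boot zify.
Set Implicit Arguments. Unset Strict Implicit. Unset Printing Implicit Defensive.

(* Soundness is a direct check on the three generating classes and on
   substitution.  Conversely, a weakly quasi-transitive digraph D with at least
   two vertices either has a module M with 1 < |M| < |D|, and is then the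
   substitution of smaller weakly quasi-transitive digraphs (the quotient D/M
   and the parts), or it is semicomplete, symmetric or transitive oriented.
   If the non-adjacency graph of D or its graph of one-way arcs is
   disconnected, each of its components is a module; if D has no non-adjacent
   pair or no one-way arc, it is semicomplete or symmetric.  In the remaining
   case D cannot be strong: by induction on |D|, splitting off a largest strong
   proper subset, in a strong digraph with connected non-adjacency graph the
   digons connect all vertices while the one-way arcs do not.  Finally, a
   largest strong proper subset of a non-strong D is a module, unless all
   strong proper subsets are singletons, which forces D to be transitive
   oriented. *)

(** * Soundness *)

Lemma asynchronousE (T : finType) (E : rel T) v u w : asynchronous E v u w =
  [&& E v u || E u v, E v w || E w v & (E v u != E v w) || (E u v != E w v)].
Proof.
rewrite /asynchronous /synchronous /in_only /out_only /both_nb /adjacent.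
by case: (E v u); case: (E u v); case: (E v w); case: (E w v).
Qed.

Section Substitution.
Variables (I : finType) (D : rel I) (U : I -> finType) (H : forall t, rel (U t)).

Lemma tagged_subst_rel i (x y : U i) :
  subst_rel D H (Tagged U x) (Tagged U y) = @H i x y.
Proof. by rewrite /subst_rel /= eqxx tagged_asE. Qed.

Lemma tag_subst_rel u v :
  tag u != tag v -> subst_rel D H u v = D (tag u) (tag v).
Proof. by rewrite /subst_rel => /negbTE ->. Qed.

Lemma subst_rel_irreflexive :
  (forall t, irreflexive (@H t)) -> irreflexive (subst_rel D H).
Proof. by move=> irrH [i x]; rewrite tagged_subst_rel irrH. Qed.

Lemma subst_rel_wqt :
  weakly_quasi_transitive D -> (forall t, weakly_quasi_transitive (@H t)) ->
  weakly_quasi_transitive (subst_rel D H).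
Proof.
move=> wqtD wqtH [i x] [j y] [k z].
have [eij|nij] := eqVneq i j; have [eik|nik] := eqVneq i k.
- move: y z; rewrite -eij -eik => y z.
  by rewrite asynchronousE /adjacent !tagged_subst_rel -asynchronousE; apply: wqtH.
- move: y; rewrite -eij => y.
  rewrite asynchronousE /adjacent !tagged_subst_rel !tag_subst_rel //= ?(eq_sym k) //.
  by case/and3P.
- move: z; rewrite -eik => z.
  rewrite asynchronousE /adjacent !tagged_subst_rel !tag_subst_rel //= ?(eq_sym j) //.
  by rewrite orbC => /and3P [].
have [ejk|njk] := eqVneq j k.
  move: z; rewrite -ejk => z.
  by rewrite asynchronousE !tag_subst_rel //= ?(eq_sym j) // !eqxx /= !andbF.
rewrite asynchronousE /adjacent !tag_subst_rel //= ?(eq_sym j) ?(eq_sym k) //.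
by rewrite -asynchronousE; apply: wqtD.
Qed.

End Substitution.

Section BasicClasses.
Variables (T : finType) (E : rel T).

Lemma transitive_oriented_wqt : transitive_oriented E -> weakly_quasi_transitive E.
Proof.
move=> [asym trans] v u w.
have O a b : E a b ==> ~~ E b a by apply/implyP/asym.
have Tr a b c : E a b ==> E b c ==> E a c.
  by apply/implyP => ab; apply/implyP; apply: trans.
move: (O v u) (O v w) (Tr u v w) (Tr w v u); rewrite asynchronousE /adjacent.
by case: (E v u); case: (E u v); case: (E v w); case: (E w v); case: (E u w); case: (E w u).
Qed.

Lemma semicomplete_wqt : semicomplete E -> weakly_quasi_transitive E.
Proof.
move=> scE v u w; have [<-|uw] := eqVneq u w; last by move=> _; apply: scE.
by rewrite asynchronousE !eqxx /= !andbF.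
Qed.

Lemma symmetric_wqt : symmetric_digraph E -> weakly_quasi_transitive E.
Proof.
move=> symE v u w; rewrite asynchronousE.
have S a b : E a b = E b a by apply/idP/idP; apply: symE.
by rewrite (S u v) (S w v); case: (E v u); case: (E v w).
Qed.

Lemma bijective_wqt (T' : finType) (E' : rel T') (f : T -> T') : bijective f ->
  (forall x y, E' (f x) (f y) = E x y) ->
  weakly_quasi_transitive E -> weakly_quasi_transitive E'.
Proof.
move=> [g fK gK] fE wqtE v u w.
have E'E a b : E' a b = E (g a) (g b) by rewrite -fE !gK.
by rewrite asynchronousE /adjacent !E'E -asynchronousE; apply: wqtE.
Qed.

End BasicClasses.

Lemma W_wqt (T : finType) (E : rel T) : inW E -> is_digraph E /\ weakly_quasi_transitive E.
Proof.
elim=> {T E}.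
- by move=> T E irrE torE; split; last exact: transitive_oriented_wqt.
- by move=> T E irrE scE; split; last exact: semicomplete_wqt.
- by move=> T E irrE symE; split; last exact: symmetric_wqt.
- move=> I D U H _ [_ wqtD] _ HW; split.
    by apply: subst_rel_irreflexive => t; case: (HW t).
  by apply: subst_rel_wqt => // t; case: (HW t).
- move=> T T' E E' f bij_f fE _ [irrE wqtE]; split; last exact: bijective_wqt bij_f fE wqtE.
  by case: bij_f => g _ gK a; rewrite -(gK a) fE irrE.
Qed.

(** * Connectivity inside a vertex set *)

Section ConnectedOn.
Variable T : finType.
Implicit Types (S M : {set T}) (R : rel T) (x y : T).

Lemma connect_stable R (P : pred T) x y :
  (forall a b, R a b -> P a -> P b) -> connect R x y -> P x -> P y.
Proof.
move=> HR /connectP [p Hp ->]; elim: p x Hp => [|a p IH] x //= /andP [Hxa Hp] Px.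
exact: IH Hp (HR _ _ Hxa Px).
Qed.

Lemma connect_cross R (P : {pred T}) x y :
  connect R x y -> x \in P -> y \notin P ->
  exists u v, [/\ u \in P, v \notin P & R u v].
Proof.
move=> Hc Px Py.
have [/existsP [u /existsP [v /and3P [Pu Pv Ruv]]]|/existsPn noR] :=
  boolP [exists u, exists v, [&& u \in P, v \notin P & R u v]].
  by exists u, v.
case/negP: Py; apply: (connect_stable (P := fun w => w \in P)) Hc Px => a b Rab Pa.
by apply/negPn/negP => Pb; move/existsPn: (noR a) => /(_ b); rewrite Pa Pb Rab.
Qed.

Lemma connect_contract R R' (f : T -> T) x y :
  (forall a b, R a b -> f a = f b \/ R' (f a) (f b)) ->
  connect R x y -> connect R' (f x) (f y).
Proof.
move=> Hf Hc.
have step a b : R a b -> connect R' (f x) (f a) -> connect R' (f x) (f b).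
  by move=> /Hf [->|Rab] // Ha; apply: connect_trans Ha (connect1 Rab).
exact: connect_stable step Hc (connect0 _ _).
Qed.

Definition restr S R : rel T := fun x y => [&& x \in S, y \in S & R x y].
Definition connected_on S R :=
  [forall x in S, forall y in S, connect (restr S R) x y].
Definition component S R x := [set w in S | connect (restr S R) x w].

Lemma connected_onP S R :
  reflect {in S &, forall x y, connect (restr S R) x y} (connected_on S R).
Proof.
apply: (iffP forall_inP) => [H x y xS yS|H x xS].
  by move/forall_inP: (H x xS); apply.
by apply/forall_inP => y yS; apply: H.
Qed.

Lemma connected_onPn S R :
  reflect (exists p q, [/\ p \in S, q \in S & ~~ connect (restr S R) p q])
          (~~ connected_on S R).
Proof.
apply: (iffP forall_inPn) => [[p pS /forall_inPn [q qS Hpq]]|[p [q [pS qS Hpq]]]].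
  by exists p, q.
by exists p => //; apply/forall_inPn; exists q.
Qed.

Lemma restr_connect_sym S R : symmetric R -> connect_sym (restr S R).
Proof. by move=> symR; apply: sym_connect_sym => x y; rewrite /restr symR andbCA. Qed.

Lemma restr_connect_sub S S' R a b :
  S \subset S' -> connect (restr S R) a b -> connect (restr S' R) a b.
Proof.
move=> /subsetP sSS'; apply: connect_sub => u v /and3P [uS vS Ruv].
by apply: connect1; rewrite /restr !sSS'.
Qed.

Lemma component_step S R x a b :
  a \in component S R x -> b \in S -> R a b -> b \in component S R x.
Proof.
rewrite !inE => /andP [aS xa] bS Rab; rewrite bS.
by apply: connect_trans xa (connect1 _); rewrite /restr aS bS.
Qed.

Lemma component_sub S R x : component S R x \subset S.
Proof. by apply/subsetP => w; rewrite inE => /andP []. Qed.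

Lemma mem_component S R x : x \in S -> x \in component S R x.
Proof. by move=> xS; rewrite inE xS connect0. Qed.

Lemma component_sym S R x y : symmetric R -> y \in component S R x -> x \in S ->
  x \in component S R y.
Proof. by move=> symR; rewrite !inE => /andP [_ xy] ->; rewrite restr_connect_sym. Qed.

Lemma component_proper S R x : symmetric R -> ~~ connected_on S R -> x \in S ->
  exists2 w, w \in S & w \notin component S R x.
Proof.
move=> symR /connected_onPn [p [q [pS qS npq]]] xS.
have [pC|] := boolP (p \in component S R x); last by exists p.
have [qC|] := boolP (q \in component S R x); last by exists q.
case/negP: npq; move: pC qC; rewrite !inE => /andP [_ xp] /andP [_ xq].
by apply: connect_trans xq; rewrite restr_connect_sym.
Qed.

Lemma connected_on_neighbour S R x : connected_on S R -> 1 < #|S| -> x \in S ->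
  exists2 y, y \in S & R x y.
Proof.
move=> /connected_onP cS /card_gt1P [a [b [aS bS ab]]] xS.
have [y yS yx] : exists2 y, y \in S & y != x.
  by case: (eqVneq a x) => [<-|]; [exists b; rewrite // eq_sym | exists a].
have xx : x \in pred1 x by rewrite inE.
have yx' : y \notin pred1 x by rewrite inE.
have [u [v [/eqP -> _ /and3P [_ vS xv]]]] := connect_cross (cS x y xS yS) xx yx'.
by exists v.
Qed.

Lemma connected_on_contract S M m0 R : M \subset S -> m0 \in M ->
  (forall m z, m \in M -> z \in S -> z \notin M -> R m z = R m0 z /\ R z m = R z m0) ->
  connected_on S R -> connected_on (m0 |: (S :\: M)) R.
Proof.
move=> /subsetP MS m0M unifR /connected_onP cS; apply/connected_onP.
pose f w := if w \in M then m0 else w.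
have S2P w : w \in m0 |: (S :\: M) -> w \in S /\ f w = w.
  rewrite in_setU1 in_setD /f => /predU1P [->|/andP [/negbTE -> //]].
  by rewrite m0M; split => //; apply: MS.
have m0S2 : m0 \in m0 |: (S :\: M) by rewrite in_setU1 eqxx.
have outS2 w : w \in S -> w \notin M -> w \in m0 |: (S :\: M).
  by move=> wS wM; rewrite in_setU1 in_setD wM wS orbT.
move=> x y /S2P [xS <-] /S2P [yS <-].
apply: connect_contract (cS x y xS yS) => a b /and3P [aS bS ab]; rewrite /f.
case: ifPn => aM; case: ifPn => bM; [by left | right..].
- by rewrite /restr m0S2 outS2 //; have [<- _] := unifR a b aM bS bM.
- by rewrite /restr m0S2 outS2 //; have [_ <-] := unifR b a bM aS aM.
- by rewrite /restr !outS2.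
Qed.

End ConnectedOn.

(** * Modules of weakly quasi-transitive digraphs *)

Section WeaklyQuasiTransitive.
Variables (T : finType) (E : rel T).
Hypothesis irrE : irreflexive E.
Hypothesis wqtE : weakly_quasi_transitive E.
Implicit Types (S M : {set T}) (R : rel T) (x y z : T).

Local Notation adj := (adjacent E).

Definition digon x y := E x y && E y x.
Definition one_way x y := E x y != E y x.
Definition nonadjacent x y := (x != y) && ~~ adj x y.

Definition strong S := connected_on S E.

Definition same_view z a b := E z a = E z b /\ E a z = E b z.
Definition module S M := M \subset S /\
  forall z a b, z \in S -> z \notin M -> a \in M -> b \in M -> same_view z a b.

Definition semicomplete_on S := {in S &, forall x y, x != y -> adj x y}.
Definition symmetric_on S := {in S &, forall x y, E x y -> E y x}.
Definition transitive_oriented_on S :=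
  {in S &, forall x y, E x y -> ~~ E y x} /\
  {in S & &, forall x y w, E x y -> E y w -> E x w}.

Lemma adjacentC x y : adj x y = adj y x. Proof. by rewrite /adjacent orbC. Qed.
Lemma digonC x y : digon x y = digon y x. Proof. by rewrite /digon andbC. Qed.
Lemma one_wayC x y : one_way x y = one_way y x. Proof. by rewrite /one_way eq_sym. Qed.
Lemma nonadjacentC x y : nonadjacent x y = nonadjacent y x.
Proof. by rewrite /nonadjacent adjacentC eq_sym. Qed.

Lemma one_way_adjacent x y : one_way x y -> adj x y.
Proof. by rewrite /one_way /adjacent; case: (E x y); case: (E y x). Qed.
Lemma digon_adjacent x y : digon x y -> adj x y.
Proof. by rewrite /adjacent => /andP [->]. Qed.
Lemma adjacent_neq x y : adj x y -> x != y.
Proof. by apply: contraTneq => ->; rewrite /adjacent irrE. Qed.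

Lemma wqt_same_view v u w : adj v u -> adj v w -> ~~ adj u w -> same_view v u w.
Proof.
move: (@wqtE v u w); rewrite /asynchronous /synchronous /in_only /out_only
  /both_nb /adjacent /same_view.
by case: (E v u); case: (E u v); case: (E v w); case: (E w v);
  case: (E u w); case: (E w u) => //= /(_ isT).
Qed.

Lemma nonadjacent_component_adjacent S x c y :
  x \in S -> x \notin component S nonadjacent y -> c \in component S nonadjacent y ->
  adj x c.
Proof.
move=> xS xC cC; apply: contraNT (xC) => nxc; apply: (component_step cC xS).
by rewrite /nonadjacent adjacentC nxc andbT; apply: contraNneq xC => <-.
Qed.

Lemma component_module S R x : x \in S ->
  (forall z a b, z \in S -> z \notin component S R x -> a \in component S R x ->
     b \in S -> R a b -> same_view z a b) ->
  module S (component S R x).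
Proof.
move=> xS Hstep; split; first exact: component_sub.
suff view_x z c : z \in S -> z \notin component S R x -> c \in component S R x ->
    same_view z x c.
  move=> z a b zS zC aC bC.
  have [xa ax] := view_x z a zS zC aC; have [xb bx] := view_x z b zS zC bC.
  by rewrite /same_view -xa -xb -ax -bx.
move=> zS zC cC; move: (cC); rewrite inE => /andP [_ xc].
pose P w := [&& w \in component S R x, E z x == E z w & E x z == E w z].
have step a b : restr S R a b -> P a -> P b.
  move=> /and3P [_ bS Rab] /and3P [aC /eqP za /eqP az].
  have [zab abz] := Hstep z a b zS zC aC bS Rab.
  by rewrite /P (component_step aC bS Rab) za zab az abz !eqxx.
have : P c by apply: connect_stable step xc _; rewrite /P mem_component // !eqxx.
by case/and3P=> _ /eqP ? /eqP ?.
Qed.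

Lemma nonadjacent_component_module S x : x \in S ->
  module S (component S nonadjacent x).
Proof.
move=> xS; apply: component_module => // z a b zS zC aC bS nab.
have bC := component_step aC bS nab.
apply: wqt_same_view; rewrite ?(nonadjacent_component_adjacent zS zC) //.
by case/andP: nab.
Qed.

Lemma one_way_component_module S x : x \in S -> module S (component S one_way x).
Proof.
move=> xS; apply: component_module => // z a b zS zC aC bS ab.
have bC := component_step aC bS ab.
have two_way c : c \in component S one_way x -> E z c = E c z.
  move=> cC; apply/eqP; apply: contraNT (zC) => zc.
  by apply: (component_step cC zS); rewrite one_wayC.
have view c d : c \in component S one_way x -> d \in component S one_way x ->
    one_way c d -> E z c -> E z d.
  move=> cC dC cd zc; apply: contraTT (cd) => nzd.
  have nzd' : ~~ adj z d by rewrite /adjacent -two_way // (negbTE nzd).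
  have czc : adj c z by rewrite /adjacent zc orbT.
  have [cz_cd zc_dc] := wqt_same_view czc (one_way_adjacent cd) nzd'.
  by rewrite /one_way -cz_cd -zc_dc two_way // eqxx.
rewrite /same_view -(two_way a aC) -(two_way b bC).
suff -> : E z a = E z b by [].
by apply/idP/idP; apply: view; rewrite // one_wayC.
Qed.

Lemma module_nonadjacent S M z m m' : module S M -> m \in M -> m' \in M ->
  z \in S -> z \notin M -> nonadjacent z m = nonadjacent z m'.
Proof.
move=> [_ modM] mM m'M zS zM; have [zm zm'] := modM z m m' zS zM mM m'M.
have neq w : w \in M -> (z != w) by move=> wM; apply: contraNneq zM => ->.
by rewrite /nonadjacent /adjacent zm zm' !neq.
Qed.

Lemma strongU1 S z : strong S ->
  (exists2 s, s \in S & E z s) -> (exists2 s, s \in S & E s z) -> strong (z |: S).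
Proof.
move=> /connected_onP sS [s sinS zs] [s' s'inS s'z].
have sub : S \subset z |: S by apply/subsetP => w wS; rewrite in_setU1 wS orbT.
have zS : z \in z |: S by rewrite in_setU1 eqxx.
have lift a b : a \in S -> b \in S -> connect (restr (z |: S) E) a b.
  by move=> aS bS; apply: restr_connect_sub sub (sS a b aS bS).
apply/connected_onP => x y; rewrite !in_setU1 => /predU1P [->|xS] /predU1P [->|yS].
- exact: connect0.
- by apply: connect_trans (connect1 _) (lift _ _ sinS yS); rewrite /restr zS (subsetP sub).
- by apply: connect_trans (lift _ _ xS s'inS) (connect1 _); rewrite /restr zS (subsetP sub).
- exact: lift.
Qed.

Lemma strong_out_all S z s : strong S -> {in S, forall c, ~~ E c z} ->
  s \in S -> E z s -> {in S, forall c, E z c}.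
Proof.
move=> /connected_onP sS noin sinS zs c cS.
apply: connect_stable (sS s c sinS cS) zs => a b /and3P [aS bS ab] za.
have: adj z b.
  apply: contraT => nzb.
  have aza : adj a z by rewrite /adjacent za orbT.
  have aab : adj a b by rewrite /adjacent ab.
  have [az_ab _] := wqt_same_view aza aab nzb.
  by move: (noin a aS); rewrite az_ab ab.
by rewrite /adjacent => /orP [] // bz; move: (noin b bS); rewrite bz.
Qed.

Lemma strong_in_all S z s : strong S -> {in S, forall c, ~~ E z c} ->
  s \in S -> E s z -> {in S, forall c, E c z}.
Proof.
move=> /connected_onP sS noout sinS sz c cS; apply: contraT => ncz.
have step a b : restr S E a b -> ~~ E a z -> ~~ E b z.
  move=> /and3P [aS bS ab] naz; apply: contra (noout a aS) => bz.
  have: adj a z.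
    apply: contraT => naz'.
    have bba : adj b a by rewrite /adjacent ab orbT.
    have bbz : adj b z by rewrite /adjacent bz.
    have [_ zb_ab] := wqt_same_view bba bbz naz'.
    by move: (noout b bS); rewrite -zb_ab ab.
  by rewrite /adjacent (negbTE naz).
by move: (connect_stable step (sS c s cS sinS) ncz); rewrite sz.
Qed.

Definition max_strong S S' := [/\ S' \proper S, strong S' &
  forall S'', S'' \proper S -> strong S'' -> #|S''| <= #|S'|].

Lemma max_strong_exists S : S != set0 -> exists S', max_strong S S'.
Proof.
move=> S0.
pose P k := [exists S' : {set T}, [&& S' \proper S, strong S' & #|S'| == k]].
have P0 : P 0.
  apply/existsP; exists set0; rewrite cards0 eqxx andbT proper0 S0 /=.
  by apply/connected_onP => x y; rewrite inE.
have Pbound k : P k -> k <= #|S|.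
  by move=> /existsP [S' /and3P [pS _ /eqP <-]]; apply/ltnW/proper_card.
have [k /existsP [S' /and3P [pS sS' /eqP kS']] kmax] := ex_maxnP (ex_intro _ 0 P0) Pbound.
exists S'; split => // S'' pS'' sS''; rewrite kS'; apply: kmax.
by apply/existsP; exists S''; rewrite pS'' sS'' eqxx.
Qed.

Lemma max_strong_join S S' z : max_strong S S' -> z \in S -> z \notin S' ->
  strong (z |: S') -> z |: S' = S.
Proof.
move=> [pS' _ maxS'] zS zS' szS'; apply/eqP; rewrite eqEsubset.
have sub : z |: S' \subset S.
  by rewrite subUset sub1set zS (proper_sub pS').
rewrite sub /=; apply: contraT => nsub.
have := maxS' _ _ szS'; rewrite cardsU1 zS' ltnn; apply.
by rewrite properE sub.
Qed.

Lemma max_strong_module S S' : max_strong S S' ->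
  {in S, forall z, z \notin S' -> ~~ strong (z |: S')} -> module S S'.
Proof.
move=> [pS' sS' _] nojoin; split; first exact: proper_sub pS'.
move=> z a b zS zS' aS bS; rewrite /same_view.
have [/exists_inP [s sS zs]|/exists_inPn noout] := boolP [exists s in S', E z s];
have [/exists_inP [s' s'S s'z]|/exists_inPn noin] := boolP [exists s in S', E s z].
- by case/negP: (nojoin z zS zS'); apply: strongU1 => //; [exists s | exists s'].
- have zall := strong_out_all sS' noin sS zs.
  by rewrite !zall // (negbTE (noin a aS)) (negbTE (noin b bS)).
- have allz := strong_in_all sS' noout s'S s'z.
  by rewrite !allz // (negbTE (noout a aS)) (negbTE (noout b bS)).
- rewrite (negbTE (noin a aS)) (negbTE (noin b bS)).
  by rewrite (negbTE (noout a aS)) (negbTE (noout b bS)).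
Qed.

Lemma strong_digon u v : digon u v -> strong [set u; v].
Proof.
move=> /andP [uv vu]; apply/connected_onP => a b.
by rewrite !in_set2 => /pred2P [] -> /pred2P [] ->; rewrite ?connect0 //;
  apply: connect1; rewrite /restr !in_set2 !eqxx ?orbT.
Qed.

Lemma strong_triangle a b c : E a b -> E b c -> E c a -> strong [set a; b; c].
Proof.
move=> ab bc ca.
have inS w : w \in [set a; b; c] = [|| w == a, w == b | w == c].
  by rewrite !inE orbA.
have e x y : E x y -> x \in [set a; b; c] -> y \in [set a; b; c] ->
    connect (restr [set a; b; c] E) x y.
  by move=> xy xS yS; apply: connect1; rewrite /restr xS yS.
have aS : a \in [set a; b; c] by rewrite inS eqxx.
have bS : b \in [set a; b; c] by rewrite inS eqxx orbT.
have cS : c \in [set a; b; c] by rewrite inS eqxx !orbT.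
have via_a w : w \in [set a; b; c] ->
    connect (restr [set a; b; c] E) w a /\ connect (restr [set a; b; c] E) a w.
  rewrite inS => /or3P [] /eqP ->; first by rewrite connect0.
  - by split; [apply: connect_trans (e b c _ _ _) (e c a _ _ _) | apply: e].
  - by split; [apply: e | apply: connect_trans (e a b _ _ _) (e b c _ _ _)].
apply/connected_onP => x y xS yS.
by apply: connect_trans (via_a x xS).1 (via_a y yS).2.
Qed.

Lemma wqt_transitive_oriented_on S :
  {in S &, forall x y, ~~ digon x y} ->
  {in S & &, forall x y w, E x y -> E y w -> ~~ E w x} ->
  transitive_oriented_on S.
Proof.
move=> nodig notri; have asym : {in S &, forall x y, E x y -> ~~ E y x}.
  by move=> x y xS yS xy; move: (nodig x y xS yS); rewrite /digon xy.
split=> // x y w xS yS wS xy yw.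
have: adj x w.
  apply: contraT => nxw.
  have yx : adj y x by rewrite /adjacent xy orbT.
  have yw' : adj y w by rewrite /adjacent yw.
  have [yx_yw _] := wqt_same_view yx yw' nxw.
  by move: (asym x y xS yS xy); rewrite yx_yw yw.
by rewrite /adjacent (negbTE (notri x y w xS yS wS xy yw)) orbF.
Qed.

Lemma max_strong_small S S' : 1 < #|S| -> max_strong S S' -> #|S'| <= 1 ->
  (strong S /\ semicomplete_on S) \/ transitive_oriented_on S.
Proof.
move=> S1 [_ _ maxS] S'1.
have small S'' : S'' \proper S -> strong S'' -> #|S''| <= 1.
  by move=> pS'' sS''; apply: leq_trans (maxS S'' pS'' sS'') S'1.
have fill (P : {set T}) : P \subset S -> 1 < #|P| -> strong P -> semicomplete_on P ->
    (strong S /\ semicomplete_on S) \/ transitive_oriented_on S.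
  move=> PS P1 sP scP; left; suff -> : S = P by [].
  apply/eqP; rewrite eq_sym eqEproper PS /=.
  by apply: contraTN P1 => pP; rewrite -leqNgt; apply: small.
have [/exists_inP [u uS /exists_inP [v vS uv]]|/exists_inPn nodig] :=
  boolP [exists u in S, exists v in S, digon u v].
  have neq_uv : u != v by apply/adjacent_neq/digon_adjacent.
  apply: (fill [set u; v]); rewrite ?cards2 ?neq_uv ?strong_digon //.
    by rewrite subUset !sub1set uS vS.
  have adj_uv := digon_adjacent uv; have adj_vu : adj v u by rewrite adjacentC.
  by move=> x y; rewrite !in_set2 => /pred2P [] -> /pred2P [] ->; rewrite ?eqxx.
have [/exists_inP [a aS /exists_inP [b bS /exists_inP [c cS /and3P [ab bc ca]]]]|
      /exists_inPn notri] :=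
  boolP [exists a in S, exists b in S, exists c in S, [&& E a b, E b c & E c a]].
  have neq x y : E x y -> x != y by move=> xy; apply: adjacent_neq; rewrite /adjacent xy.
  apply: (fill [set a; b; c]); rewrite ?strong_triangle //.
  - by rewrite !subUset !sub1set aS bS cS.
  - by apply/card_gt1P; exists a, b; rewrite !inE !eqxx ?orbT neq.
  - move=> x y; rewrite !inE -!orbA => /or3P [] /eqP -> /or3P [] /eqP ->;
    by rewrite ?eqxx // /adjacent ?ab ?bc ?ca ?orbT.
right; apply: wqt_transitive_oriented_on.
  by move=> x y xS yS; move/exists_inPn: (nodig x xS); apply.
move=> x y w xS yS wS xy yw; apply: contraT => /negbNE wx.
move/exists_inPn: (notri x xS) => /(_ y yS) /exists_inPn /(_ w wS).
by rewrite xy yw wx.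
Qed.

Lemma semicomplete_not_coconnected S : semicomplete_on S -> 1 < #|S| ->
  ~~ connected_on S nonadjacent.
Proof.
move=> scS S1; apply/negP => /connected_on_neighbour /(_ S1) nS.
have [x [_ [xS _ _]]] := card_gt1P S1.
have [y yS /andP [xy nxy]] := nS x xS.
by rewrite scS in nxy.
Qed.

Lemma transitive_oriented_not_strong S : transitive_oriented_on S -> 1 < #|S| ->
  ~~ strong S.
Proof.
move=> [asym trans] /card_gt1P [x [y [xS yS xy]]]; apply/negP => /connected_onP sS.
have arc a b : a \in S -> b \in S -> a != b -> E a b.
  move=> aS bS ab.
  have step u v : restr S E u v -> (u == a) || E a u -> (v == a) || E a v.
    move=> /and3P [uS vS uv] /predU1P [<-|au]; first by rewrite uv orbT.
    by rewrite (trans a u v) ?orbT.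
  have /predU1P [ba|//] := connect_stable step (sS a b aS bS) (predU1l _ (erefl a)).
  by rewrite ba eqxx in ab.
by move: (asym x y xS yS (arc x y xS yS xy)); rewrite arc // eq_sym.
Qed.

Section MaxStrongStep.
Variables S S' : {set T}.
Hypotheses (sS : strong S) (hS : connected_on S nonadjacent) (S1 : 1 < #|S|).
Hypothesis maxS' : max_strong S S'.

Let pS' : S' \proper S. Proof. by case: maxS'. Qed.
Let sS' : strong S'. Proof. by case: maxS'. Qed.
Let subS' : S' \subset S. Proof. exact: proper_sub pS'. Qed.

Lemma max_strong_gt1 : 1 < #|S'|.
Proof.
rewrite ltnNge; apply/negP => small.
have [[_ scS]|torS] := max_strong_small S1 maxS' small.
  by move: hS; rewrite (negbTE (semicomplete_not_coconnected scS S1)).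
by move: sS; rewrite (negbTE (transitive_oriented_not_strong torS S1)).
Qed.

Hypothesis IH : forall S0 : {set T}, #|S0| < #|S| -> strong S0 -> 1 < #|S0| ->
  connected_on S0 nonadjacent -> connected_on S0 digon && ~~ connected_on S0 one_way.

(* Were two vertices outside S', then S' would be a module; collapsing it to a
   vertex m0 leaves a smaller strong set whose digons link m0 to some v
   outside S', so that v |: S' would be strong. *)
Lemma max_strong_complement_single : exists z, S :\: S' = [set z].
Proof.
have S'1 := max_strong_gt1; have ltS' := proper_card pS'.
have cardD : #|S :\: S'| = #|S| - #|S'| by rewrite cardsD (setIidPr subS').
suff few : #|S :\: S'| <= 1 by apply/cards1P; apply/eqP; lia.
rewrite leqNgt; apply/negP => many.
have nojoin : {in S, forall w, w \notin S' -> ~~ strong (w |: S')}.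
  move=> w wS wS'; apply/negP => /(max_strong_join maxS' wS wS') wS'S.
  by have := cardsU1 w S'; rewrite wS'S wS' add1n; lia.
have modS' := max_strong_module maxS' nojoin.
have [m0 [_ [m0S' _ _]]] := card_gt1P S'1.
pose S2 := m0 |: (S :\: S').
have m0S2 : m0 \in S2 by rewrite in_setU1 eqxx.
have cardS2 : #|S2| = #|S :\: S'|.+1 by rewrite cardsU1 in_setD m0S'.
have sS2 : strong S2.
  apply: connected_on_contract subS' (m0S') _ (sS) => m w mS' wS wS'.
  by have [? ?] := modS'.2 w m m0 wS wS' mS' m0S'; split.
have hS2 : connected_on S2 nonadjacent.
  apply: connected_on_contract subS' (m0S') _ (hS) => m w mS' wS wS'.
  by rewrite !(nonadjacentC _ w) (module_nonadjacent modS' mS' m0S').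
have S2gt1 : 1 < #|S2| by lia.
have /andP [dS2 _] := IH (ltac:(lia) : #|S2| < #|S|) sS2 S2gt1 hS2.
have [v vS2 m0v] := connected_on_neighbour dS2 S2gt1 m0S2.
have vm0 : v != m0 by apply: contraTneq m0v => ->; rewrite /digon irrE.
move: vS2; rewrite in_setU1 (negbTE vm0) in_setD => /andP [vS' vS].
case/negP: (nojoin v vS vS'); case/andP: m0v => m0v vm0'.
by apply: strongU1 => //; exists m0.
Qed.

Section Apex.
Variable z : T.
Hypothesis Sz : S :\: S' = [set z].

Let apexP w : w \in S -> (w \notin S') = (w == z).
Proof. by move=> wS; rewrite -in_set1 -Sz in_setD wS andbT. Qed.
Let zS : z \in S. Proof. by have := set11 z; rewrite -Sz => /setDP []. Qed.
Let zS' : z \notin S'. Proof. by have := set11 z; rewrite -Sz => /setDP []. Qed.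

Lemma apex_out_neighbour : exists2 y, y \in S' & E z y.
Proof.
have [y yS zy] := connected_on_neighbour sS S1 zS; exists y => //.
by apply: contraTT zy; rewrite apexP // => /eqP ->; rewrite irrE.
Qed.

Lemma apex_nonadjacent : exists2 t, t \in S' & ~~ adj z t.
Proof.
have [t tS /andP [zt nzt]] := connected_on_neighbour hS S1 zS; exists t => //.
by rewrite -[t \in S']negbK apexP // eq_sym.
Qed.

Lemma apex_digon_connected : connected_on S' digon -> connected_on S digon.
Proof.
move=> /connected_onP dS'.
have [/exists_inP [d dinS' zd]|/exists_inPn nozd] := boolP [exists d in S', digon z d].
  have to_d a : a \in S -> connect (restr S digon) d a.
    move=> aS; have [aS'|] := boolP (a \in S').
      exact: restr_connect_sub subS' (dS' d a dinS' aS').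
    rewrite apexP // => /eqP ->; apply: connect1.
    by rewrite /restr zS (subsetP subS') // digonC.
  apply/connected_onP => a b aS bS; apply: connect_trans (to_d b bS).
  by rewrite restr_connect_sym ?to_d //; apply: digonC.
have [t tS' nzt] := apex_nonadjacent; case/negP: nzt.
have [y yS' zy] := apex_out_neighbour.
have step a b : restr S' digon a b -> adj z a -> adj z b.
  move=> /and3P [aS bS ab] za; apply: contraT => nzb.
  have az : adj a z by rewrite adjacentC.
  have [az_ab za_ba] := wqt_same_view az (digon_adjacent ab) nzb.
  by move: (nozd a aS); rewrite /digon az_ab za_ba; case/andP: ab => -> ->.
by apply: connect_stable step (dS' y t yS' tS') _; rewrite /adjacent zy.
Qed.

Lemma apex_not_one_way_connected : connected_on S' digon ->
  ~~ connected_on S' one_way -> ~~ connected_on S one_way.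
Proof.
move=> /connected_onP dS' nAS'; apply/negP => /connected_onP AS.
have [t tS' nzt] := apex_nonadjacent; case/negP: nzt.
have [w0 w0S' w0At] := component_proper one_wayC nAS' tS'.
have [a [w [aAt wAt /and3P [aS' wS' aw]]]] :=
  connect_cross (dS' t w0 tS' w0S') (mem_component _ tS') w0At.
have tw : digon t w.
  have modAt := (one_way_component_module tS').2.
  by rewrite /digon; have [<- <-] := modAt w a t wS' wAt aAt (mem_component _ tS').
have tAw : t \notin component S' one_way w.
  by apply: contra wAt => tAw; apply: component_sym one_wayC tAw wS'.
have zAw : z \notin component S' one_way w.
  by apply: contra zS' => /(subsetP (component_sub _ _ _)).
have [g [v [gAw vAw /and3P [gS vS gv]]]] :=
  connect_cross (AS w z (subsetP subS' _ wS') zS) (mem_component _ wS') zAw.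
have /eqP vz : v == z.
  by rewrite -apexP //; apply: contra vAw => vS'; apply: component_step gAw vS' gv.
subst v.
have tg : digon t g.
  have modAw := (one_way_component_module wS').2.
  by rewrite /digon; have [-> ->] := modAw t g w tS' tAw gAw (mem_component _ wS').
apply: contraT => nzt.
have gt : adj g t by rewrite adjacentC digon_adjacent.
have [gz_gt zg_tg] := wqt_same_view (one_way_adjacent gv) gt nzt.
by move: gv; rewrite /one_way gz_gt zg_tg; case/andP: tg => -> ->.
Qed.


Section CodisconnectedBase.
Hypothesis nhS' : ~~ connected_on S' nonadjacent.
Variable y : T.
Hypotheses (yS' : y \in S') (zy : E z y).
Local Notation C := (component S' nonadjacent y).

Lemma outside_component_witness x : x \in S' -> x \notin C ->
  exists u, [/\ u \in S', u \notin C, nonadjacent u z & same_view y x u].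
Proof.
move=> xS' xC; pose Cx := component S' nonadjacent x.
have yCx : y \notin Cx.
  by apply: contra xC => yCx; apply: component_sym nonadjacentC yCx xS'.
have /connected_onP chS := hS.
have [u [v [uCx vCx /and3P [uS vS uv]]]] :=
  connect_cross (chS x y (subsetP subS' _ xS') (subsetP subS' _ yS'))
    (mem_component _ xS') yCx.
have uS' : u \in S' := subsetP (component_sub _ _ _) _ uCx.
have /eqP vz : v == z.
  by rewrite -apexP //; apply: contra vCx => vS'; apply: component_step uCx vS' uv.
subst v; exists u; split=> //.
  apply: contra xC => uC; move: uC uCx; rewrite !inE xS' => /andP [_ yu] /andP [_ xu].
  by apply: connect_trans yu _; rewrite restr_connect_sym //; apply: nonadjacentC.
exact: (nonadjacent_component_module xS').2 y x u yS' yCx (mem_component _ xS') uCx.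
Qed.

Lemma outside_component_view x : x \in S' -> x \notin C -> same_view y x z.
Proof.
move=> xS' xC.
have [u [uS' uC /andP [_ nuz] [yx_yu xy_uy]]] := outside_component_witness xS' xC.
have yu : adj y u.
  by rewrite adjacentC (nonadjacent_component_adjacent uS' uC (mem_component _ yS')).
have yz : adj y z by rewrite /adjacent zy orbT.
have [yu_yz uy_zy] := wqt_same_view yu yz nuz.
by rewrite /same_view yx_yu yu_yz xy_uy uy_zy.
Qed.

Lemma component_boundary_arcs c w : c \in C -> w \in S -> w \notin C -> adj c w ->
  E c w = E y z /\ E w c = E z y.
Proof.
move=> cC wS wC cw; have modC := nonadjacent_component_module yS'.
have yC : y \in C := mem_component _ yS'.
have [wS'|] := boolP (w \in S').
  have [-> ->] := modC.2 w c y wS' wC cC yC.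
  by have [-> ->] := outside_component_view wS' wC.
rewrite apexP // => /eqP wz; subst w.
have [x0 x0S' x0C] := component_proper nonadjacentC nhS' yS'.
have [u [uS' uC /andP [_ nuz] _]] := outside_component_witness x0S' x0C.
have cu : adj c u by rewrite adjacentC (nonadjacent_component_adjacent uS' uC cC).
have [<- <-] := wqt_same_view cu cw nuz.
have [uc_uy cu_yu] := modC.2 u c y uS' uC cC yC.
have [yu_yz uy_zy] := outside_component_view uS' uC.
by rewrite cu_yu uc_uy yu_yz uy_zy.
Qed.

Lemma apex_split_codisconnected :
  connected_on S digon && ~~ connected_on S one_way.
Proof.
have yC : y \in C := mem_component _ yS'.
have zC : z \notin C by apply: contra zS' => /(subsetP (component_sub _ _ _)).
have yS := subsetP subS' _ yS'.
have [yz|nyz] := boolP (E y z); last first.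
  have /connected_onP csS := sS.
  have [a [b [aC bC /and3P [_ bS ab]]]] := connect_cross (csS y z yS zS) yC zC.
  have aab : adj a b by rewrite /adjacent ab.
  have [ab_yz _] := component_boundary_arcs aC bS bC aab.
  by move: ab; rewrite ab_yz (negbTE nyz).
apply/andP; split.
  have y_to a : a \in S -> connect (restr S digon) y a.
    move=> aS; have [aS'|] := boolP (a \in S'); last first.
      by rewrite apexP // => /eqP ->; apply: connect1; rewrite /restr yS zS /digon yz zy.
    have [aC|aC] := boolP (a \in C); last first.
      have [ya ay] := outside_component_view aS' aC.
      by apply: connect1; rewrite /restr yS aS /digon ya ay yz zy.
    have [x0 x0S' x0C] := component_proper nonadjacentC nhS' yS'.
    have x0S := subsetP subS' _ x0S'.
    have ax0 : adj a x0 by rewrite adjacentC (nonadjacent_component_adjacent x0S' x0C aC).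
    have [a_x0 x0_a] := component_boundary_arcs aC x0S x0C ax0.
    have [y_x0 x0_y] := outside_component_view x0S' x0C.
    have yx0 : restr S digon y x0 by rewrite /restr yS x0S /digon y_x0 x0_y yz zy.
    have x0a : restr S digon x0 a by rewrite /restr x0S aS /digon x0_a a_x0 zy yz.
    exact: connect_trans (connect1 yx0) (connect1 x0a).
  apply/connected_onP => a b aS bS; apply: connect_trans (y_to b bS).
  by rewrite restr_connect_sym ?y_to //; apply: digonC.
apply/negP => /connected_onP AS.
have [a [b [aC bC /and3P [_ bS ab]]]] := connect_cross (AS y z yS zS) yC zC.
have [ab_yz ba_zy] := component_boundary_arcs aC bS bC (one_way_adjacent ab).
by move: ab; rewrite /one_way ab_yz ba_zy yz zy.
Qed.

End CodisconnectedBase.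

End Apex.
End MaxStrongStep.

Lemma strong_coconnected_split S : strong S -> 1 < #|S| ->
  connected_on S nonadjacent -> connected_on S digon && ~~ connected_on S one_way.
Proof.
have [n] := ubnP #|S|; elim: n => // n IHn in S *; rewrite ltnS => Sn sS S1 hS.
have [S' maxS'] : exists S', max_strong S S'.
  by apply: max_strong_exists; rewrite -card_gt0 ltnW.
have IH S0 : #|S0| < #|S| -> strong S0 -> 1 < #|S0| -> connected_on S0 nonadjacent ->
    connected_on S0 digon && ~~ connected_on S0 one_way.
  by move=> S0S; apply: IHn; apply: leq_trans S0S Sn.
have [z Sz] := max_strong_complement_single sS hS S1 maxS' IH.
have [pS' sS' _] := maxS'.
have [hS'|nhS'] := boolP (connected_on S' nonadjacent).
  have /andP [dS' nAS'] := IH S' (proper_card pS') sS' (max_strong_gt1 sS hS S1 maxS') hS'.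
  by rewrite (apex_digon_connected sS hS S1 maxS' Sz dS')
             (apex_not_one_way_connected hS S1 maxS' Sz dS' nAS').
have [y yS' zy] := apex_out_neighbour sS S1 Sz.
exact: (apex_split_codisconnected sS hS maxS' Sz nhS' yS' zy).
Qed.

Definition nontrivial_module S := exists M, [/\ module S M, 1 < #|M| & #|M| < #|S|].

Lemma component_nontrivial_module S R x y : symmetric R -> ~~ connected_on S R ->
  x \in S -> y \in S -> x != y -> R x y -> module S (component S R x) ->
  nontrivial_module S.
Proof.
move=> symR nS xS yS xy Rxy modC; exists (component S R x); split=> //.
  apply/card_gt1P; exists x, y.
  by rewrite mem_component // (component_step (mem_component _ xS) yS Rxy).
have [w wS wC] := component_proper symR nS xS.
by apply/proper_card/properP; split; [apply: component_sub | exists w].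
Qed.

Lemma not_strong_decomposition S : ~~ strong S -> 1 < #|S| ->
  nontrivial_module S \/ transitive_oriented_on S.
Proof.
move=> nsS S1; have [S' maxS'] : exists S', max_strong S S'.
  by apply: max_strong_exists; rewrite -card_gt0 ltnW.
have [pS' _ _] := maxS'.
have [small|S'1] := leqP #|S'| 1.
  have [[sS _]|torS] := max_strong_small S1 maxS' small.
    by rewrite sS in nsS.
  by right.
left; exists S'; split=> //; last exact: proper_card.
apply: max_strong_module => // z zS zS'; apply: contra nsS => szS'.
by rewrite -(max_strong_join maxS' zS zS' szS').
Qed.

Lemma wqt_decomposition S : 1 < #|S| ->
  [\/ nontrivial_module S, semicomplete_on S, symmetric_on S | transitive_oriented_on S].
Proof.
move=> S1.
have [/exists_inP [x xS /exists_inP [y yS nxy]]|/exists_inPn adjS] :=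
  boolP [exists x in S, exists y in S, nonadjacent x y]; last first.
  apply: Or42 => x y xS yS xy; move/exists_inPn: (adjS x xS) => /(_ y yS).
  by rewrite /nonadjacent xy negbK.
have [hS|] := boolP (connected_on S nonadjacent); last first.
  move=> nhS; apply: Or41; case/andP: (nxy) => xy _.
  exact: (component_nontrivial_module nonadjacentC nhS xS yS xy nxy
           (nonadjacent_component_module xS)).
have [/exists_inP [a aS /exists_inP [b bS ab]]|/exists_inPn twoS] :=
  boolP [exists a in S, exists b in S, one_way a b]; last first.
  apply: Or43 => a b aS bS; move/exists_inPn: (twoS a aS) => /(_ b bS).
  by rewrite /one_way negbK => /eqP <-.
have [AS|nAS] := boolP (connected_on S one_way); last first.
  apply: Or41; have ab' := adjacent_neq (one_way_adjacent ab).
  exact: (component_nontrivial_module one_wayC nAS aS bS ab' ab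
           (one_way_component_module aS)).
have nsS : ~~ strong S.
  by apply: contraL AS => sS; case/andP: (strong_coconnected_split sS S1 hS).
by have [?|?] := not_strong_decomposition nsS S1; [apply: Or41 | apply: Or44].
Qed.

(** * Completeness *)

Definition induced S : rel {x | x \in S} := fun a b => E (val a) (val b).
Arguments induced : clear implicits.

Lemma induced_irreflexive S : irreflexive (induced S).
Proof. by move=> a; apply: irrE. Qed.

Section ModuleSubstitution.
Variables (S M : {set T}) (m0 : T).
Hypotheses (modM : module S M) (m0M : m0 \in M) (M1 : 1 < #|M|) (MS : #|M| < #|S|).

(* S is the substitution into the quotient S2, where M shrinks to m0, of the
   blocks [block t] of vertices represented by t. *)
Let S2 := m0 |: (S :\: M).
Let rep w := if w \in M then m0 else w.
Let block (t : {x | x \in S2}) : {set T} := [set w in S | rep w == val t].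
Let U (t : {x | x \in S2}) : finType := {w | w \in block t}.
Let H (t : {x | x \in S2}) : rel (U t) := induced (block t).

Let m0S : m0 \in S. Proof. exact: subsetP modM.1 _ m0M. Qed.

Let repS2 w : w \in S -> rep w \in S2.
Proof.
by move=> wS; rewrite /rep !inE; case: ifP => wM; rewrite ?eqxx // wM wS orbT.
Qed.

Let blockP t w : w \in block t -> w \in S /\ rep w = val t.
Proof. by rewrite inE => /andP [? /eqP]. Qed.

Lemma quotient_card_lt : #|S2| < #|S|.
Proof.
have [m [mM mm0]] : exists m, m \in M /\ m != m0.
  have [a [b [aM bM ab]]] := card_gt1P M1.
  by case: (eqVneq a m0) => [am0|]; [exists b; rewrite -am0 eq_sym | exists a].
apply/proper_card/properP; split; last first.
  by exists m; [exact: subsetP modM.1 _ mM | rewrite !inE mM (negbTE mm0)].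
by apply/subsetP => w; rewrite !inE => /predU1P [->|/andP [_ //]].
Qed.

Lemma block_card_lt t : #|block t| < #|S|.
Proof.
have sub : block t \subset S by apply/subsetP => w /blockP [].
apply/proper_card/properP; split=> //.
have [tm0|tm0] := eqVneq (val t) m0.
  have [w wS wM] : exists2 w, w \in S & w \notin M.
    apply/exists_inP; apply: contraTT MS => /exists_inPn noM; rewrite -leqNgt.
    by apply/subset_leq_card/subsetP => w wS; apply/negPn/noM.
  by exists w; rewrite // inE wS /rep (negbTE wM) tm0; apply: contraNneq wM => ->.
by exists m0; rewrite // inE m0S /rep m0M eq_sym.
Qed.

Definition blocks_val (u : {t : {x | x \in S2} & U t}) : {x | x \in S} :=
  exist _ (val (tagged u)) (blockP (valP (tagged u))).1.

Definition rep_block (a : {x | x \in S}) : {x | x \in S2} :=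
  exist _ (rep (val a)) (repS2 (valP a)).

Lemma mem_rep_block a : val a \in block (rep_block a).
Proof. by rewrite inE (valP a) /= eqxx. Qed.

Lemma blocks_val_bij : bijective blocks_val.
Proof.
exists (fun a => Tagged U (exist _ (val a) (mem_rep_block a) : U (rep_block a))).
  case=> t x; rewrite /blocks_val /=.
  have xt : rep_block (exist _ (val x) (blockP (valP x)).1) = t.
    by apply: val_inj; rewrite /= (blockP (valP x)).2.
  by move: (mem_rep_block _); rewrite xt => ?; congr existT; apply: val_inj.
by move=> a; apply: val_inj.
Qed.

Lemma blocks_val_rel u v :
  induced S (blocks_val u) (blocks_val v) = subst_rel (induced S2) H u v.
Proof.
case: u => t x; case: v => s y; rewrite /induced /=.
have [ts|ts] := eqVneq t s; first by move: y; rewrite -ts => y; rewrite tagged_subst_rel.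
rewrite tag_subst_rel //=.
have [xS xt] := blockP (valP x); have [yS ys] := blockP (valP y).
move: xt ys; rewrite /rep; case: ifP => xM; case: ifP => yM => xt ys.
- by case/eqP: ts; apply: val_inj; rewrite -xt -ys.
- by rewrite -xt -ys; have [_ ->] := modM.2 (val y) (val x) m0 yS (negbT yM) xM m0M.
- by rewrite -xt -ys; have [-> _] := modM.2 (val x) (val y) m0 xS (negbT xM) yM m0M.
- by rewrite -xt -ys.
Qed.

Hypothesis IH : forall S0 : {set T}, #|S0| < #|S| -> inW (induced S0).

Lemma module_substitution_W : inW (induced S).
Proof.
have H2W := IH quotient_card_lt.
have HW (t : {x | x \in S2}) : inW (@H t) by apply: IH; apply: block_card_lt.
apply: (W_iso (f := blocks_val)) blocks_val_bij _ (W_subst H2W HW) => u v.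
exact: blocks_val_rel.
Qed.

End ModuleSubstitution.

Lemma induced_W S : inW (induced S).
Proof.
have [n] := ubnP #|S|; elim: n => // n IHn in S *; rewrite ltnS => Sn.
have IH S0 : #|S0| < #|S| -> inW (induced S0).
  by move=> S0S; apply: IHn; apply: leq_trans S0S Sn.
have [S1|S1] := leqP #|S| 1.
  apply: W_semi; first exact: induced_irreflexive.
  move=> a b ab; apply: contraTT S1 => _.
  rewrite -ltnNge; apply/card_gt1P; exists (val a), (val b).
  by rewrite val_eqE (valP a) (valP b).
have [[M [modM M1 MS]]|scS|symS|[asym trans]] := wqt_decomposition S1.
- have [m0 [_ [m0M _ _]]] := card_gt1P M1.
  exact: module_substitution_W modM m0M M1 MS IH.
- apply: W_semi; first exact: induced_irreflexive.
  by move=> a b; move: (scS _ _ (valP a) (valP b)); rewrite val_eqE.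
- apply: W_sym; first exact: induced_irreflexive.
  by move=> a b; apply: symS; apply: valP.
- apply: W_trans; first exact: induced_irreflexive.
  split=> [a b|a b c].
    by apply: asym; apply: valP.
  by apply: trans; apply: valP.
Qed.

Lemma wqt_W : inW E.
Proof.
apply: (W_iso (f := val)) (induced_W [set: T]) => //.
by exists (fun x => exist _ x (in_setT x)) => [a|x]; first apply: val_inj.
Qed.

End WeaklyQuasiTransitive.

Theorem theorem3p2 (T : finType) (E : rel T) :
  is_digraph E -> (inW E <-> weakly_quasi_transitive E).
Proof.
move=> irrE; split; first by case/W_wqt.
exact: wqt_W.
Qed.
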